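(* If $\Delta\subseteq\mathbb{R}^d$ is a Delzant polytope, then $\Upsilon(\Delta)=\mathrm{width}(\Delta)$.
   Context: A Delzant polytope is a full-dimensional polytope $\Delta\subseteq\mathbb{R}^d$ (vertices need not be lattice points) whose normal fan consists of unimodular cones, i.e. at each vertex the primitive inner normals of the $d$ incident facets form a basis of $(\mathbb{Z}^d)^*$. Write the facets as $\{x\in\Delta:\langle u_k,x\rangle=-\phi_k\}$, $k=1,\dots,m$, with $u_k\in(\mathbb{Z}^d)^*$ primitive inner facet normals and $\phi_k\in\mathbb{R}$, so $\Delta=\{x:\langle u_k,x\rangle\ge-\phi_k\ \forall k\}$. $\Upsilon(\Delta)$ is the minimum of all positive values $\sum_{k=1}^m a_k\phi_k$ where $a_k$ are nonnegative integers with $\sum_{k=1}^m a_ku_k=0$. $\mathrm{width}(\Delta)=\min_{u\in(\mathbb{Z}^d)^*\setminus\{0\}}\max_{x,y\in\Delta}|u(x)-u(y)|$. *)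

From HB Require Import structures.
From mathcomp Require Import all_boot all_order all_algebra.
Set Implicit Arguments. Unset Strict Implicit. Unset Printing Implicit Defensive.
Import Order.TTheory GRing.Theory Num.Theory.
Local Open Scope ring_scope.

Definition pair (R : realFieldType) (d : nat) (u : 'rV[int]_d) (x : 'rV[R]_d) : R :=
  \sum_(i < d) (u ord0 i)%:~R * x ord0 i.

Definition inPoly (R : realFieldType) (d m : nat) (u : 'I_m -> 'rV[int]_d)
  (phi : 'I_m -> R) (x : 'rV[R]_d) : Prop :=
  forall k, - phi k <= pair (u k) x.

Definition active (R : realFieldType) (d m : nat) (u : 'I_m -> 'rV[int]_d)
  (phi : 'I_m -> R) (x : 'rV[R]_d) (k : 'I_m) : Prop :=
  pair (u k) x = - phi k.

Definition primitive (d : nat) (v : 'rV[int]_d) : Prop :=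
  forall (c : int) (w : 'rV[int]_d), v = c *: w -> `|c| = 1.

Definition is_vertex (R : realFieldType) (d m : nat) (u : 'I_m -> 'rV[int]_d)
  (phi : 'I_m -> R) (x : 'rV[R]_d) : Prop :=
  inPoly u phi x /\
  forall y : 'rV[R]_d, inPoly u phi (x + y) -> inPoly u phi (x - y) -> y = 0.

Definition delzant (R : realFieldType) (d m : nat) (u : 'I_m -> 'rV[int]_d)
  (phi : 'I_m -> R) : Prop :=
  (forall k, primitive (u k)) /\
  (exists B : R, forall x, inPoly u phi x -> forall i, `|x ord0 i| <= B) /\
  (exists x : 'rV[R]_d, forall k, - phi k < pair (u k) x) /\
  (* each inequality defines a facet (distinct facets): the facet has a
     point lying on no other facet *)
  (forall k, exists x, inPoly u phi x /\ active u phi x k /\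
                       forall j, j != k -> - phi j < pair (u j) x) /\
  (* unimodularity at each vertex: exactly d incident facets, whose normals
     form a Z-basis of (Z^d)^* *)
  (forall x, is_vertex u phi x ->
     exists s : 'I_d -> 'I_m, injective s /\
       (forall k, active u phi x k <-> exists i, s i = k) /\
       (\matrix_(i < d, j < d) u (s i) ord0 j) \in unitmx).

Definition is_Upsilon (R : realFieldType) (d m : nat) (u : 'I_m -> 'rV[int]_d)
  (phi : 'I_m -> R) (v : R) : Prop :=
  0 < v /\
  (exists a : 'I_m -> nat, \sum_k u k *+ a k = 0 /\ \sum_k phi k *+ a k = v) /\
  (forall a : 'I_m -> nat, \sum_k u k *+ a k = 0 -> 0 < \sum_k phi k *+ a k ->
     v <= \sum_k phi k *+ a k).

Definition is_width (R : realFieldType) (d m : nat) (u : 'I_m -> 'rV[int]_d)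
  (phi : 'I_m -> R) (w : R) : Prop :=
  (exists v : 'rV[int]_d, v != 0 /\
     (exists x y, inPoly u phi x /\ inPoly u phi y /\ `|pair v x - pair v y| = w) /\
     (forall x y, inPoly u phi x -> inPoly u phi y -> `|pair v x - pair v y| <= w)) /\
  (forall v : 'rV[int]_d, v != 0 ->
     exists x y, inPoly u phi x /\ inPoly u phi y /\ w <= `|pair v x - pair v y|).

From HB Require Import structures.
From mathcomp Require Import all_boot all_order all_algebra.
From mathcomp Require Import ring lra.
From Stdlib Require Import Classical.
Set Implicit Arguments. Unset Strict Implicit. Unset Printing Implicit Defensive.
Import Order.TTheory GRing.Theory Num.Theory.
Local Open Scope ring_scope.

(* For a relation a (sum_k a_k u_k = 0) and any x in Delta,
   sum_k a_k phi_k = sum_k a_k (<u_k, x> + phi_k) is a sum of nonnegative slacks,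
   so it bounds the spread max - min of each u_k with a_k > 0; hence
   Upsilon >= min_k spread(u_k) >= width.
   Conversely, a linear form v is minimised at a vertex, and there optimality
   together with unimodularity writes v as a combination of the incident normals
   with nonnegative integer coefficients a, with min v = - sum_k a_k phi_k.
   Doing the same for -v, the spread of v is sum_k (a_k + c_k) phi_k for the
   relation a + c, hence spread(v) >= Upsilon for every v != 0. *)

Section NatComb.
Variables (V : nmodType) (m : nat).
Implicit Types (G : 'I_m -> V) (a c : 'I_m -> nat).

Definition nat_comb G a : V := \sum_k G k *+ a k.

Lemma nat_combD G a c : nat_comb G (fun k => a k + c k)%N = nat_comb G a + nat_comb G c.
Proof. by rewrite /nat_comb -big_split; apply: eq_bigr => k _; rewrite mulrnDr. Qed.

Lemma nat_comb_supp G a : nat_comb G a != 0 -> exists k, (0 < a k)%N.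
Proof.
case: (pickP (fun k => 0 < a k)%N) => [k Hk _|Hnone]; first by exists k.
by rewrite /nat_comb big1 ?eqxx // => k _; move: (Hnone k); case: (a k).
Qed.

Lemma nat_comb_fiber d G (s : 'I_d -> 'I_m) (n : 'I_d -> nat) :
  nat_comb G (fun k => \sum_(j | s j == k) n j) = \sum_j G (s j) *+ n j.
Proof.
rewrite /nat_comb [RHS](partition_big s xpredT) //=; apply: eq_bigr => k _.
by rewrite -sumrMnr; apply: eq_bigr => j /eqP <-.
Qed.

End NatComb.

Section Pairing.
Variables (R : realFieldType) (d : nat).
Implicit Types (w : 'rV[int]_d) (x y : 'rV[R]_d).

Lemma pairDr w x y : pair w (x + y) = pair w x + pair w y.
Proof. by rewrite /pair -big_split; apply: eq_bigr => i _; rewrite mxE mulrDr. Qed.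

Lemma pairZr w (t : R) x : pair w (t *: x) = t * pair w x.
Proof. by rewrite /pair mulr_sumr; apply: eq_bigr => i _; rewrite mxE mulrCA. Qed.

Lemma pairNr w x : pair w (- x) = - pair w x.
Proof. by rewrite -scaleN1r pairZr mulN1r. Qed.

Lemma pairBr w x y : pair w (x - y) = pair w x - pair w y.
Proof. by rewrite pairDr pairNr. Qed.

Lemma pair0l x : pair 0 x = 0.
Proof. by rewrite /pair big1 // => i _; rewrite mxE mul0r. Qed.

Lemma pairDl w1 w2 x : pair (w1 + w2) x = pair w1 x + pair w2 x.
Proof. by rewrite /pair -big_split; apply: eq_bigr => i _; rewrite mxE intrD mulrDl. Qed.

Lemma pairNl w x : pair (- w) x = - pair w x.
Proof. by rewrite /pair -sumrN; apply: eq_bigr => i _; rewrite mxE intrN mulNr. Qed.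

Lemma pairMnl w n x : pair (w *+ n) x = pair w x *+ n.
Proof. by elim: n => [|n IH]; rewrite ?mulr0n ?pair0l // !mulrS pairDl IH. Qed.

Lemma pairZl (c : int) w x : pair (c *: w) x = c%:~R * pair w x.
Proof. by rewrite /pair mulr_sumr; apply: eq_bigr => i _; rewrite !mxE intrM mulrA. Qed.

Lemma pair_sum (I : finType) (P : pred I) (f : I -> 'rV[int]_d) x :
  pair (\sum_(i | P i) f i) x = \sum_(i | P i) pair (f i) x.
Proof. exact: (big_morph (fun w => pair w x) (fun w1 w2 => pairDl w1 w2 x) (pair0l x)). Qed.

Lemma primitive_neq0 w : primitive w -> w != 0.
Proof. by move=> Hw; apply/eqP => w0; move: (Hw 0 w); rewrite scale0r w0 => /(_ erefl). Qed.

End Pairing.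

Section Polytope.
Variables (R : realFieldType) (d m : nat).
Variables (u : 'I_m -> 'rV[int]_d) (phi : 'I_m -> R).
Implicit Types (x y z : 'rV[R]_d) (v : 'rV[int]_d) (a : 'I_m -> nat).

Local Notation ucomb := (nat_comb u).
Local Notation phicomb := (nat_comb phi).

Definition slack x k := pair (u k) x + phi k.

Lemma slack_ge0 x k : inPoly u phi x -> 0 <= slack x k.
Proof. by move=> Hx; rewrite /slack -lerBlDr sub0r. Qed.

Lemma slack_gt0 x k : inPoly u phi x -> ~ active u phi x k -> 0 < slack x k.
Proof.
move=> Hx Hk; rewrite lt_neqAle slack_ge0 // andbT eq_sym.
by apply/eqP => /eqP; rewrite addr_eq0 => /eqP.
Qed.

Lemma pair_ucomb_add_phicomb a x : pair (ucomb a) x + phicomb a = \sum_k slack x k *+ a k.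
Proof.
rewrite /nat_comb pair_sum -big_split.
by apply: eq_bigr => k _; rewrite pairMnl mulrnDl.
Qed.

Lemma relation_phicomb_slack a x : ucomb a = 0 -> phicomb a = \sum_k slack x k *+ a k.
Proof. by move=> Ha; rewrite -pair_ucomb_add_phicomb Ha pair0l add0r. Qed.

Lemma slack_le_phicomb a x k :
  inPoly u phi x -> ucomb a = 0 -> (0 < a k)%N -> slack x k <= phicomb a.
Proof.
move=> Hx Ha Hk; rewrite (relation_phicomb_slack x Ha) (bigD1 k) //=.
apply: ler_wpDr; first by apply: sumr_ge0 => j _; rewrite mulrn_wge0 ?slack_ge0.
by rewrite -{1}(mulr1n (slack x k)) ler_wpMn2l ?slack_ge0.
Qed.

Lemma phicomb_gt0 a x k : (forall j, - phi j < pair (u j) x) ->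
  ucomb a = 0 -> (0 < a k)%N -> 0 < phicomb a.
Proof.
move=> Hx Ha Hk; have Hx' : inPoly u phi x by move=> j; apply: ltW.
rewrite (relation_phicomb_slack x Ha) (bigD1 k) //=.
apply: ltr_pwDl; last by apply: sumr_ge0 => j _; rewrite mulrn_wge0 ?slack_ge0.
by rewrite pmulrn_lgt0 // /slack -ltrBlDr sub0r.
Qed.

Definition is_spread v w :=
  (exists x y, inPoly u phi x /\ inPoly u phi y /\ `|pair v x - pair v y| = w) /\
  (forall x y, inPoly u phi x -> inPoly u phi y -> `|pair v x - pair v y| <= w).

Lemma spread_normal_le_phicomb k w a : is_spread (u k) w ->
  ucomb a = 0 -> (0 < a k)%N -> w <= phicomb a.
Proof.
move=> [[x [y [Hx [Hy <-]]]] _] Ha Hk; rewrite ler_norml.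
move: (slack_le_phicomb Hx Ha Hk) (slack_le_phicomb Hy Ha Hk).
by move: (slack_ge0 k Hx) (slack_ge0 k Hy); rewrite /slack; lra.
Qed.

Lemma active_balanced z y k : inPoly u phi (z + y) -> inPoly u phi (z - y) ->
  active u phi z k -> pair (u k) y = 0.
Proof. by move=> Hp Hm; rewrite /active => Hk; move: (Hp k) (Hm k); rewrite pairDr pairBr Hk; lra. Qed.

(* The step length is the least ratio slack x k / (- <u_k, y>) over the descending k. *)
Lemma ray_exit x y k1 : inPoly u phi x ->
  (forall k, active u phi x k -> 0 <= pair (u k) y) -> pair (u k1) y < 0 ->
  exists t, [/\ 0 < t, inPoly u phi (x + t *: y) &
    exists k, ~ active u phi x k /\ active u phi (x + t *: y) k].
Proof.
move=> Hx Hact Hk1.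
pose ratio k := slack x k / - pair (u k) y.
have [k0 Hk0 Hmin] := @arg_minP _ _ _ k1 [pred k | pair (u k) y < 0] ratio Hk1.
have Hin0 : ~ active u phi x k0 by move/Hact; rewrite leNgt (Hk0 : pair (u k0) y < 0).
have Ht : 0 < ratio k0 by rewrite divr_gt0 ?oppr_gt0 ?slack_gt0.
exists (ratio k0); split => //.
  move=> k; rewrite pairDr pairZr; have := Hx k.
  case: (leP 0 (pair (u k) y)) => Hky; first by have := mulr_ge0 (ltW Ht) Hky; lra.
  have := Hmin k Hky; rewrite ler_pdivlMr ?oppr_gt0 // /slack.
  set T := ratio k0; lra.
exists k0; split => //; rewrite /active pairDr pairZr /ratio /slack.
by field; apply: ltr0_neq0.
Qed.

Lemma feasible_step x y : inPoly u phi x ->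
  (forall k, active u phi x k -> 0 <= pair (u k) y) ->
  exists2 t, 0 < t & inPoly u phi (x + t *: y).
Proof.
move=> Hx Hact; case: (pickP [pred k | pair (u k) y < 0]) => [k1 Hk1|Hnone].
  by have [t [Ht Hxt _]] := ray_exit Hx Hact Hk1; exists t.
exists 1 => // k; rewrite pairDr pairZr mul1r.
by move: (Hnone k) (Hx k); rewrite /= ltNge => /negbFE; lra.
Qed.

Definition inactive_set z := [set k | pair (u k) z != - phi k].

Lemma inactive_set_proper z y t k0 :
  (forall k, active u phi z k -> pair (u k) y = 0) ->
  ~ active u phi z k0 -> active u phi (z + t *: y) k0 ->
  inactive_set (z + t *: y) \proper inactive_set z.
Proof.
move=> Hact Hk0 Hk0t; apply/properP; split.
  apply/subsetP => k; rewrite !inE; apply: contraNN => /eqP Hk.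
  by rewrite pairDr pairZr Hact // mulr0 addr0 Hk.
by exists k0; rewrite inE ?negbK; apply/eqP.
Qed.

Lemma not_vertex_dir v z : inPoly u phi z -> ~ is_vertex u phi z ->
  exists y, [/\ y != 0, pair v y <= 0, inPoly u phi (z + y) & inPoly u phi (z - y)].
Proof.
move=> Hz Hnv.
have [y [Hy0 Hp Hm]] : exists y, [/\ y != 0, inPoly u phi (z + y) & inPoly u phi (z - y)].
  apply: NNPP => Hne; apply: Hnv; split => // y Hp Hm.
  by apply/eqP/negPn/negP => Hy0; apply: Hne; exists y.
have [Hle|Hgt] := leP (pair v y) 0; first by exists y.
by exists (- y); rewrite oppr_eq0 opprK pairNr; split => //; lra.
Qed.

Definition normal_mx (s : 'I_d -> 'I_m) : 'M[int]_d := \matrix_(i < d, j < d) u (s i) ord0 j.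

Definition unimodular_vertices := forall x, is_vertex u phi x ->
  exists s : 'I_d -> 'I_m,
    (forall k, active u phi x k <-> exists i, s i = k) /\ normal_mx s \in unitmx.

Definition normal_mxR s : 'M[R]_d := map_mx (fun z : int => z%:~R) (normal_mx s).

Lemma normal_mxR_tr_unit s : normal_mx s \in unitmx -> (normal_mxR s)^T \in unitmx.
Proof. by rewrite unitmx_tr !unitmxE /normal_mxR det_map_mx; apply: rmorph_unit. Qed.

Lemma mul_normal_mxR_tr s x i : (x *m (normal_mxR s)^T) ord0 i = pair (u (s i)) x.
Proof. by rewrite !mxE /pair; apply: eq_bigr => j _; rewrite !mxE mulrC. Qed.

Lemma pair_solve s (c : 'rV[R]_d) i : normal_mx s \in unitmx ->
  pair (u (s i)) (c *m invmx (normal_mxR s)^T) = c ord0 i.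
Proof. by move=> Hs; rewrite -mul_normal_mxR_tr mulmxKV ?normal_mxR_tr_unit. Qed.

Definition basic_point s : 'rV[R]_d := \row_i (- phi (s i)) *m invmx (normal_mxR s)^T.

Lemma basic_point_unique s x : normal_mx s \in unitmx ->
  (forall i, active u phi x (s i)) -> x = basic_point s.
Proof.
move=> Hs Hx; have Hxs : x *m (normal_mxR s)^T = \row_i (- phi (s i)).
  by apply/rowP => i; rewrite mul_normal_mxR_tr Hx mxE.
by rewrite /basic_point -Hxs mulmxK ?normal_mxR_tr_unit.
Qed.

Definition feasible_basis (F : {ffun 'I_d -> 'I_m}) :=
  (normal_mx F \in unitmx) && [forall k, - phi k <= pair (u k) (basic_point F)].

Lemma basic_point_vertex F : feasible_basis F -> is_vertex u phi (basic_point F).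
Proof.
case/andP => Hs /forallP Hin; split => // y Hp Hm.
have Hy0 : y *m (normal_mxR F)^T = 0.
  apply/rowP => i; rewrite mul_normal_mxR_tr mxE.
  by apply: active_balanced Hp Hm _; rewrite /active pair_solve // mxE.
by move: (congr1 (mulmx^~ (invmx (normal_mxR F)^T)) Hy0); rewrite mulmxK ?normal_mxR_tr_unit // mul0mx.
Qed.

Section Vertices.
Hypothesis unimodular : unimodular_vertices.

Lemma vertex_basic_point x : is_vertex u phi x ->
  exists2 F, feasible_basis F & x = basic_point F.
Proof.
move=> Hx; have [s [Ha Hs]] := unimodular Hx.
have HF : normal_mx [ffun i => s i] = normal_mx s by apply/matrixP => i j; rewrite !mxE ffunE.
have Hxs : x = basic_point [ffun i => s i].
  by apply: basic_point_unique; rewrite ?HF // => i; rewrite ffunE; apply/Ha; exists i.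
exists [ffun i => s i] => //; rewrite /feasible_basis HF Hs -Hxs.
by apply/forallP; case: Hx.
Qed.

(* The test direction y moves off the i-th incident facet while staying on the
   others, so optimality of x forces the i-th coefficient of v to be >= 0. *)
Lemma min_vertex_coef_ge0 v x s (b : 'I_d -> int) i : inPoly u phi x ->
  (forall k, active u phi x k <-> exists j, s j = k) -> normal_mx s \in unitmx ->
  v = \sum_j b j *: u (s j) ->
  (forall z, inPoly u phi z -> pair v x <= pair v z) -> 0 <= b i.
Proof.
move=> Hx Ha Hs Hv Hmin; rewrite leNgt; apply/negP => Hbi.
pose y : 'rV[R]_d := delta_mx 0 i *m invmx (normal_mxR s)^T.
have Hy j : pair (u (s j)) y = (j == i)%:R by rewrite pair_solve // mxE eqxx.
have Hvy : pair v y = (b i)%:~R.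
  rewrite Hv pair_sum (bigD1 i) //= big1 ?addr0; first by rewrite pairZl Hy eqxx mulr1.
  by move=> j Hj; rewrite pairZl Hy (negbTE Hj) mulr0.
have [t Ht Hxt] : exists2 t, 0 < t & inPoly u phi (x + t *: y).
  by apply: feasible_step => // k /Ha [j <-]; rewrite Hy ler0n.
have : t * (b i)%:~R < 0 by rewrite pmulr_rlt0 // ltrz0.
by move: (Hmin _ Hxt); rewrite pairDr pairZr Hvy; lra.
Qed.

Lemma min_vertex_comb v x : is_vertex u phi x ->
  (forall z, inPoly u phi z -> pair v x <= pair v z) ->
  exists a, ucomb a = v /\ pair v x = - phicomb a.
Proof.
move=> Hx Hmin; have [s [Ha Hs]] := unimodular Hx.
pose b j := (v *m invmx (normal_mx s)) ord0 j.
have Hv : v = \sum_j b j *: u (s j).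
  rewrite -{1}(mulmxKV Hs v) mulmx_sum_row; apply: eq_bigr => j _.
  by congr (_ *: _); apply/rowP => i; rewrite !mxE.
have Hb i : 0 <= b i by apply: min_vertex_coef_ge0 Hv Hmin; case: Hx.
pose n j := `|b j|%N.
have Hn j : u (s j) *+ n j = b j *: u (s j) by rewrite -scaler_nat natz gez0_abs.
exists (fun k => \sum_(j | s j == k) n j); rewrite !nat_comb_fiber.
split; first by rewrite [RHS]Hv; apply: eq_bigr => j _; rewrite Hn.
rewrite {1}Hv pair_sum -sumrN; apply: eq_bigr => j _.
rewrite -Hn pairMnl -mulNrn; congr (_ *+ _); apply/Ha; by exists j.
Qed.

Section Bounded.
Variable B : R.
Hypothesis bounded : forall x, inPoly u phi x -> forall i, `|x ord0 i| <= B.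

Lemma exists_descending_facet x y : inPoly u phi x -> y != 0 ->
  exists k, pair (u k) y < 0.
Proof.
move=> Hx /rV0Pn [i Hi].
case: (pickP [pred k | pair (u k) y < 0]) => [k Hk|Hnone]; first by exists k.
have Hy k : 0 <= pair (u k) y by move: (Hnone k); rewrite /= ltNge => /negbFE.
have HB0 : 0 <= B by apply: le_trans (bounded Hx i).
have Hyi : 0 < `|y 0 i| by rewrite normr_gt0.
pose t := (B + `|x ord0 i| + 1) / `|y 0 i|.
have Ht : 0 <= t by rewrite divr_ge0 ?ltW //; have := normr_ge0 (x ord0 i); lra.
have Hxt : inPoly u phi (x + t *: y).
  by move=> k; rewrite pairDr pairZr; move: (Hx k) (mulr_ge0 Ht (Hy k)); lra.
have Hty : `|t * y 0 i| = B + `|x ord0 i| + 1.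
  by rewrite normrM (ger0_norm Ht) divfK ?lt0r_neq0.
move: (bounded Hxt i) (ler_normB (x ord0 i + t * y 0 i) (x ord0 i)).
by rewrite !mxE addrAC subrr add0r Hty; lra.
Qed.

Lemma exists_vertex_le v z : inPoly u phi z ->
  exists z', is_vertex u phi z' /\ pair v z' <= pair v z.
Proof.
have [n] := ubnP #|inactive_set z|; elim: n z => // n IH z Hn Hz.
have [Hv|Hnv] := classic (is_vertex u phi z); first by exists z.
have [y [Hy0 Hvy Hp Hm]] := not_vertex_dir v Hz Hnv.
have Hact k : active u phi z k -> pair (u k) y = 0 := active_balanced Hp Hm.
have [k1 Hk1] := exists_descending_facet Hz Hy0.
have [|t [Ht Hzt [k0 [Hk0 Hk0t]]]] := ray_exit Hz _ Hk1; first by move=> k /Hact ->.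
have [|z' [Hz' Hle]] := IH (z + t *: y) _ Hzt.
  by apply: leq_trans (proper_card (inactive_set_proper Hact Hk0 Hk0t)) _.
exists z'; split => //; apply: le_trans Hle _.
by rewrite pairDr pairZr; have := mulr_ge0_le0 (ltW Ht) Hvy; lra.
Qed.

Variable x0 : 'rV[R]_d.
Hypothesis x0_in : inPoly u phi x0.

(* There are finitely many feasible bases, so one of them minimises v. *)
Lemma exists_min_vertex v : exists x, is_vertex u phi x /\
  forall z, inPoly u phi z -> pair v x <= pair v z.
Proof.
have [z0 [Hz0 _]] := exists_vertex_le v x0_in.
have [F0 HF0 _] := vertex_basic_point Hz0.
have [F HF Hmin] := @arg_minP _ _ _ F0 feasible_basis (fun F => pair v (basic_point F)) HF0.
exists (basic_point F); split; first exact: basic_point_vertex.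
move=> z Hz; have [z' [Hz' Hle]] := exists_vertex_le v Hz.
have [F' HF' Ez'] := vertex_basic_point Hz'.
by apply: le_trans (Hmin _ HF') _; rewrite -Ez'.
Qed.

Lemma spread_relation v : v != 0 -> exists w, is_spread v w /\
  exists r, [/\ ucomb r = 0, exists k, (0 < r k)%N & phicomb r = w].
Proof.
move=> Hv0.
have [x [Hx Hminx]] := exists_min_vertex v; have [a [Ha Hxa]] := min_vertex_comb Hx Hminx.
have [y [Hy Hminy]] := exists_min_vertex (- v); have [c [Hc Hyc]] := min_vertex_comb Hy Hminy.
case: Hx => Hx _; case: Hy => Hy _.
have Hmax z : inPoly u phi z -> pair v z <= pair v y by move/Hminy; rewrite !pairNl lerN2.
exists (pair v y - pair v x); split.
  split; first by exists y, x; rewrite ger0_norm // subr_ge0 Hmax.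
  move=> z z' Hz Hz'; rewrite ler_norml.
  by move: (Hminx _ Hz) (Hminx _ Hz') (Hmax _ Hz) (Hmax _ Hz'); lra.
have [k Hk] : exists k, (0 < a k)%N by apply: (@nat_comb_supp _ _ u); rewrite Ha.
exists (fun k => a k + c k)%N; split; first by rewrite nat_combD Ha Hc subrr.
  by exists k; rewrite addn_gt0 Hk.
by rewrite nat_combD; move: Hxa Hyc; rewrite pairNl; lra.
Qed.

End Bounded.
End Vertices.
End Polytope.

Theorem proposition3p7 (R : realFieldType) (d m : nat)
  (u : 'I_m -> 'rV[int]_d) (phi : 'I_m -> R) :
  (0 < d)%N -> delzant u phi ->
  exists w : R, is_Upsilon u phi w /\ is_width u phi w.
Proof.
move=> d_gt0 [Hprim [[B HB] [[x0 Hx0] [_ Hvx]]]].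
have HV : unimodular_vertices u phi by move=> x /Hvx [s [_ Hs]]; exists s.
have Hx0' : inPoly u phi x0 by move=> k; apply: ltW.
have [W HW] := fin_all_exists (fun k => spread_relation HV HB Hx0' (primitive_neq0 (Hprim k))).
(* This is the only use of 0 < d: it forces m > 0, so that W has a minimum. *)
have e_neq0 : delta_mx 0 (Ordinal d_gt0) != 0 :> 'rV[R]_d.
  by apply/rV0Pn; exists (Ordinal d_gt0); rewrite mxE !eqxx oner_neq0.
have [k1 _] := exists_descending_facet HB Hx0' e_neq0.
have [k0 _ Hmin] := @arg_minP _ _ _ k1 xpredT W isT.
have W_le k a : nat_comb u a = 0 -> (0 < a k)%N -> W k0 <= nat_comb phi a.
  by move=> Ha Hk; apply: le_trans (Hmin k isT) (spread_normal_le_phicomb (HW k).1 Ha Hk).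
have [Hspread [r [Hr [kr Hkr] Hrw]]] := HW k0.
exists (W k0); split.
  split; first by rewrite -Hrw; apply: phicomb_gt0 Hx0 Hr Hkr.
  split; first by exists r.
  move=> a Ha /lt0r_neq0 /nat_comb_supp [k Hk]; exact: W_le Ha Hk.
split; first by exists (u k0); split; [apply: primitive_neq0 | exact: Hspread].
move=> v /(spread_relation HV HB Hx0') [w [[[x [y [Hx [Hy Hxy]]]] _] [r' [Hr' [k Hk] Hr'w]]]].
by exists x, y; rewrite Hxy -Hr'w; split; [|split; [|apply: W_le Hr' Hk]].
Qed.
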